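(* In the setting of the context, suppose the algorithm described there terminates after $N$ steps, i.e. $CB^{(N)}=0$. Then all entries of the returned matrix $B$ (the non-zero columns of $B^{(N)}$) are non-negative.
   Context: Multi-patch setting: $\Omega\subset\mathbb{R}^2$ is the union of closures of $K$ pairwise disjoint patches $\Omega_k=G_k((0,1)^2)$; on each patch there is a local basis $\Phi^{(k)}=(\phi_i^{(k)})_{i=1}^{n^{(k)}}$ obtained by mapping tensor-product B-splines (degree $p$, open knot vectors) via $G_k$. Any two patches sharing an edge $\Gamma_{k,\ell}=\partial\Omega_k\cap\partial\Omega_\ell$ (of positive length) have nested trace spaces; the closures of two patches intersect in the empty set, a vertex of at least one of them, or an edge of at least one of them; and any two patches meeting at a T-junction share an edge. Let $n^{(pw)}=\sum_kn^{(k)}$ and index the concatenated coefficient vector $\underline u_h=(\underline u_h^{(1)},\ldots,\underline u_h^{(K)})\in\mathbb{R}^{n^{(pw)}}$. Constraint matrix $C$: for every pair of patches $\Omega_k,\Omega_\ell$ sharing an edge $\Gamma$ with $V_h^{(k)}|_\Gamma\subseteq V_h^{(\ell)}|_\Gamma$, and every $i$ with $\phi_i^{(k)}|_\Gamma\not\equiv0$, write $\phi_i^{(k)}=\sum_jE^{(k,\ell)}_{i,j}\phi_j^{(\ell)}$ on $\Gamma$ with nonnegative coefficients with row sums $1$ (knot insertion); then $C$ has a row representing $u_i^{(k)}-\sum_jE^{(k,\ell)}_{i,j}u_j^{(\ell)}=0$. For a matrix $D$ and row $m$ define $\mathcal F_m(D)=\{n: D_{m,n}\ne0,\ D_{m,n}D_{m,j}\le0\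 \forall j\ne n\}$. Algorithm: $B^{(0)}=I$; for $\nu=1,2,\ldots$ until $CB^{(\nu)}=0$: choose $m_\nu,n_\nu$ with $n_\nu\in\mathcal F_{m_\nu}(CB^{(\nu-1)})$, set $R^{(\nu)}=I-\frac{1}{e_{m_\nu}^\top CB^{(\nu-1)}e_{n_\nu}}e_{n_\nu}e_{m_\nu}^\top CB^{(\nu-1)}$, $B^{(\nu)}=B^{(\nu-1)}R^{(\nu)}$. Return $B$ = the non-zero columns of $B^{(N)}$, $N$ the first index with $CB^{(N)}=0$. *)

From mathcomp Require Import all_boot all_order all_algebra.
Set Implicit Arguments. Unset Strict Implicit. Unset Printing Implicit Defensive.
Import Order.TTheory GRing.Theory Num.Theory.
Local Open Scope ring_scope.

Section Defs.
Variable R : realFieldType.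

(* Algebraic shape of the constraint matrix C (rows = constraints, columns =
   concatenated coefficient indices 1..n^(pw)).  [patch j] is the patch
   (in 'I_K) to which global index j belongs.  Every row m of C represents
   u_i - sum_j E_{i,j} u_j = 0 where i lies on some patch k, the E_{i,j}
   are non-negative, have row sum 1, and are supported on the indices of a
   single other patch l (the neighbouring patch across the shared edge). *)
Definition is_constraint_matrix (K r n : nat) (patch : 'I_n -> 'I_K)
  (C : 'M[R]_(r, n)) : Prop :=
  forall m : 'I_r, exists (i : 'I_n) (l : 'I_K) (E : 'rV[R]_n),
    [/\ l != patch i,
        forall j, 0 <= E 0 j,
        \sum_j E 0 j = 1,
        forall j, E 0 j != 0 -> patch j = l
      & row m C = delta_mx 0 i - E].

Definition Fset (r n : nat) (D : 'M[R]_(r, n)) (m : 'I_r) : pred 'I_n :=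
  fun k => (D m k != 0) && [forall j, (j != k) ==> (D m k * D m j <= 0)].

Definition step_mx (r n : nat) (C : 'M[R]_(r, n)) (B : 'M[R]_n)
  (m : 'I_r) (k : 'I_n) : 'M[R]_n :=
  1%:M - ((C *m B) m k)^-1 *: (delta_mx k m *m (C *m B)).

(* B^(nu) for the choice sequence ch, where ch nu = (m_{nu+1}, n_{nu+1}). *)
Fixpoint Biter (r n : nat) (C : 'M[R]_(r, n)) (ch : nat -> 'I_r * 'I_n)
  (nu : nat) : 'M[R]_n :=
  match nu with
  | 0 => 1%:M
  | nu'.+1 => let B := Biter C ch nu' in B *m step_mx C B (ch nu').1 (ch nu').2
  end.

Definition valid_run (r n : nat) (C : 'M[R]_(r, n)) (ch : nat -> 'I_r * 'I_n)
  (N : nat) : Prop :=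
  (forall nu, (nu < N)%N ->
     C *m Biter C ch nu != 0 /\
     (ch nu).2 \in Fset (C *m Biter C ch nu) (ch nu).1) /\
  C *m Biter C ch N = 0.

(* The entries of the returned matrix B = non-zero columns of B^(N):
   B^(N)_{i,j} with column j of B^(N) non-zero. *)
Definition returned_entries_nonneg (n : nat) (BN : 'M[R]_n) : Prop :=
  forall i j : 'I_n, col j BN != 0 -> 0 <= BN i j.

End Defs.

From mathcomp Require Import all_boot all_order all_algebra.
Import Order.TTheory GRing.Theory Num.Theory.
Local Open Scope ring_scope.

(* With D = C B, one step replaces B by B - D_{m,k}^-1 (B e_k)(e_m^T D), so
   entry (i,j) becomes B_{ij} - B_{ik} (D_{mj} / D_{mk}).  For j = k this is 0,
   and for j <> k the pivot rule k \in F_m(D) makes D_{mj} / D_{mk} <= 0, so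
   the entry can only grow.  Non-negativity of B^(0) = I therefore propagates
   along the run. *)

Section PivotStep.

Variables (R : realFieldType) (r n : nat) (C : 'M[R]_(r, n)).

Lemma mulmx_step_mx (B : 'M[R]_n) (m : 'I_r) (k : 'I_n) :
  B *m step_mx C B m k = B - ((C *m B) m k)^-1 *: (col k B *m row m (C *m B)).
Proof.
rewrite /step_mx; move: (C *m B) => D.
by rewrite mulmxBr mulmx1 -scalemxAr -(mul_delta_mx (0 : 'I_1)) -mulmxA -rowE
  mulmxA -colE.
Qed.

Lemma mulmx_step_mxE (B : 'M[R]_n) (m : 'I_r) (k : 'I_n) i j :
  (B *m step_mx C B m k) i j = B i j - ((C *m B) m k)^-1 * (B i k * (C *m B) m j).
Proof. by rewrite mulmx_step_mx !mxE big_ord1 !mxE. Qed.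

Lemma Fset_pivot_ratio_le0 (D : 'M[R]_(r, n)) (m : 'I_r) (k j : 'I_n) :
  k \in Fset D m -> j != k -> (D m k)^-1 * D m j <= 0.
Proof.
case/andP=> Dmk_neq0 /forallP/(_ j)/implyP Dmkj_le0 /Dmkj_le0 {}Dmkj_le0.
have -> : (D m k)^-1 * D m j = D m k * D m j * (D m k)^-1 ^+ 2.
  by rewrite expr2 mulrACA mulfV // mul1r mulrC.
by rewrite mulr_le0_ge0 // sqr_ge0.
Qed.

Lemma step_mx_nonneg (B : 'M[R]_n) (m : 'I_r) (k : 'I_n) :
  (forall i j, 0 <= B i j) -> k \in Fset (C *m B) m ->
  forall i j, 0 <= (B *m step_mx C B m k) i j.
Proof.
move=> B_ge0 k_pivot i j; rewrite mulmx_step_mxE.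
have [->|j_neq_k] := eqVneq j k.
  by rewrite mulrCA mulVf ?mulr1 ?subrr //; case/andP: k_pivot.
rewrite mulrCA -mulrN addr_ge0 // mulr_ge0 // oppr_ge0.
exact: Fset_pivot_ratio_le0.
Qed.

Lemma Biter_nonneg (ch : nat -> 'I_r * 'I_n) (N : nat) :
  (forall nu, (nu < N)%N -> (ch nu).2 \in Fset (C *m Biter C ch nu) (ch nu).1) ->
  forall nu, (nu <= N)%N -> forall i j, 0 <= Biter C ch nu i j.
Proof.
move=> pivots; elim=> [|nu IHnu] nu_le_N i j /=.
  by rewrite mxE ler0n.
apply: step_mx_nonneg; last exact: pivots.
exact: IHnu (ltnW nu_le_N).
Qed.

End PivotStep.

Theorem mainTheorem5 (R : realFieldType) (K r n : nat) (patch : 'I_n -> 'I_K)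
  (C : 'M[R]_(r, n)) (ch : nat -> 'I_r * 'I_n) (N : nat) :
  is_constraint_matrix patch C ->
  valid_run C ch N ->
  returned_entries_nonneg (Biter C ch N).
Proof.
move=> _ [run _] i j _.
by apply: (@Biter_nonneg R r n C ch N) => // nu /run[].
Qed.
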